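(* Let $f\colon A\to X$ and $g\colon B\to Y$ be entire maps of marked simplicial sets. Then the Leibniz product $f\hat\times g\colon(A\times Y)\cup_{A\times B}(X\times B)\to X\times Y$ with respect to the cartesian product of marked simplicial sets is a complicial marking extension.
   Context: A marked simplicial set is a simplicial set $X$ with a set of marked simplices of positive dimension containing all degenerate simplices; maps are simplicial maps preserving marked simplices; the category is $\mathsf{sSet}^+$. Simplicial operators act on the right. A map is entire if it is an isomorphism on underlying simplicial sets. The cartesian product $X\times Y$ in $\mathsf{sSet}^+$ has underlying simplicial set $X\times Y$, with $(x,y)$ marked iff $x$ and $y$ are both marked. For $n\ge1$ and $0\le k\le n$, the $k$-complicial $n$-simplex $\Delta^n_k$ is $\Delta^n$ in which a non-degenerate simplex is marked iff it contains all vertices in $\{k-1,k,k+1\}\cap[n]$. For $n\ge2$, $(\Delta^n_k)''$ is $\Delta^n_k$ with additionally all $(n-1)$-simplices marked, and $(\Delta^n_k)'$ is $\Delta^n_k$ with additionally all $(n-1)$-faces other than the $k$-th face $\delta_k$ marked; the inclusion $(\Delta^n_k)'\to(\Delta^n_k)''$ is an elementary complicial marking extension. A complicial marking extension is a map in the closure of the elementary complicial marking extensions under pushouts along arbitrary maps and transfinite composition. *)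

From mathcomp Require Import all_boot.
Set Implicit Arguments. Unset Strict Implicit. Unset Printing Implicit Defensive.

(* Simplicial operators [m] -> [n] : monotone maps 'I_m.+1 -> 'I_n.+1 *)
Record sop (m n : nat) := Sop {
  sop_fun : {ffun 'I_m.+1 -> 'I_n.+1};
  sop_mono : [forall i : 'I_m.+1, forall j : 'I_m.+1,
                 (i <= j) ==> (sop_fun i <= sop_fun j)] }.

Lemma sop_eq m n (a b : sop m n) :
  (forall i, sop_fun a i = sop_fun b i) -> a = b.
Proof.
case: a b => [f fm] [g gm] /= H.
have E : f = g by apply/ffunP.
subst g; by rewrite (bool_irrelevance fm gm).
Qed.

Lemma sop_id_mono n :
  [forall i : 'I_n.+1, forall j : 'I_n.+1,
     (i <= j) ==> (([ffun x => x] : {ffun 'I_n.+1 -> 'I_n.+1}) i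
                   <= ([ffun x => x] : {ffun 'I_n.+1 -> 'I_n.+1}) j)].
Proof. by apply/forallP=> i; apply/forallP=> j; rewrite !ffunE; apply/implyP. Qed.

Definition sop_id n : sop n n := Sop (sop_id_mono n).

Lemma sop_comp_mono k m n (a : sop m n) (b : sop k m) :
  [forall i : 'I_k.+1, forall j : 'I_k.+1,
     (i <= j) ==> (([ffun x => sop_fun a (sop_fun b x)] : {ffun 'I_k.+1 -> 'I_n.+1}) i
                   <= ([ffun x => sop_fun a (sop_fun b x)] : {ffun 'I_k.+1 -> 'I_n.+1}) j)].
Proof.
apply/forallP=> i; apply/forallP=> j; rewrite !ffunE; apply/implyP=> hij.
have hb := sop_mono b; have ha := sop_mono a.
move/forallP: hb => /(_ i) /forallP /(_ j) /implyP /(_ hij) hb.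
by move/forallP: ha => /(_ (sop_fun b i)) /forallP /(_ (sop_fun b j)) /implyP /(_ hb).
Qed.

Definition sop_comp k m n (a : sop m n) (b : sop k m) : sop k n :=
  Sop (sop_comp_mono a b).

(* Simplicial sets; simplicial operators act on the right:
   act a x  is  x . a  for  a : [m] -> [n], x an n-simplex.           *)
Record sSet := SSet {
  simp : nat -> Type;
  act : forall m n, sop m n -> simp n -> simp m;
  act_id : forall n (x : simp n), act (sop_id n) x = x;
  act_comp : forall k m n (a : sop m n) (b : sop k m) (x : simp n),
      act b (act a x) = act (sop_comp a b) x }.

Definition degenerate (X : sSet) n (x : simp X n) : Prop :=
  exists m (s : sop n m) (y : simp X m), m < n /\ x = act s y.

Record msSet := MSSet {
  uss : sSet;
  marked : forall n, simp uss n -> Prop;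
  marked_pos : forall n (x : simp uss n), marked x -> 0 < n;
  marked_degen : forall n (x : simp uss n), degenerate x -> marked x }.

Record mmap (X Y : msSet) := MMap {
  mfun : forall n, simp (uss X) n -> simp (uss Y) n;
  mfun_nat : forall m n (a : sop m n) (x : simp (uss X) n),
      mfun (act a x) = act a (mfun x);
  mfun_mark : forall n (x : simp (uss X) n), marked x -> marked (mfun x) }.

Definition meq (X Y : msSet) (f g : mmap X Y) : Prop :=
  forall n (x : simp (uss X) n), mfun f x = mfun g x.

Definition mid (X : msSet) : mmap X X :=
  @MMap X X (fun n x => x) (fun m n a x => erefl) (fun n x h => h).

Lemma mcomp_nat (X Y Z : msSet) (g : mmap Y Z) (f : mmap X Y) m n (a : sop m n)
  (x : simp (uss X) n) : mfun g (mfun f (act a x)) = act a (mfun g (mfun f x)).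
Proof. by rewrite !mfun_nat. Qed.

Definition mcomp (X Y Z : msSet) (g : mmap Y Z) (f : mmap X Y) : mmap X Z :=
  @MMap X Z (fun n x => mfun g (mfun f x)) (mcomp_nat g f)
    (fun n x h => mfun_mark g (mfun_mark f h)).

Definition entire (X Y : msSet) (f : mmap X Y) : Prop :=
  forall n, bijective (@mfun X Y f n).

Lemma sprod_act_id (X Y : sSet) n (x : (simp X n * simp Y n)%type) :
  (act (sop_id n) x.1, act (sop_id n) x.2) = x.
Proof. by case: x => a b; rewrite /= !act_id. Qed.

Lemma sprod_act_comp (X Y : sSet) k m n (a : sop m n) (b : sop k m)
  (x : (simp X n * simp Y n)%type) :
  (act b (act a x.1, act a x.2).1, act b (act a x.1, act a x.2).2)
  = (act (sop_comp a b) x.1, act (sop_comp a b) x.2).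
Proof. by rewrite /= !act_comp. Qed.

Definition sprod (X Y : sSet) : sSet :=
  @SSet (fun n => (simp X n * simp Y n)%type)
    (fun m n a x => (act a x.1, act a x.2))
    (@sprod_act_id X Y) (@sprod_act_comp X Y).

Definition prod_marked (X Y : msSet) n (x : simp (sprod (uss X) (uss Y)) n) : Prop :=
  marked x.1 /\ marked x.2.

Lemma prod_marked_pos (X Y : msSet) n (x : simp (sprod (uss X) (uss Y)) n) :
  prod_marked x -> 0 < n.
Proof. by case=> h _; exact: marked_pos h. Qed.

Lemma prod_marked_degen (X Y : msSet) n (x : simp (sprod (uss X) (uss Y)) n) :
  degenerate x -> prod_marked x.
Proof.
case=> m [s [y [lt ->]]]; split; apply: marked_degen.
- by exists m, s, y.1.
- by exists m, s, y.2.
Qed.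

Definition mprod_ms (X Y : msSet) : msSet :=
  @MSSet (sprod (uss X) (uss Y)) (@prod_marked X Y)
    (@prod_marked_pos X Y) (@prod_marked_degen X Y).

Lemma mprod_nat (X Y X' Y' : msSet) (f : mmap X X') (g : mmap Y Y') m n (a : sop m n)
  (x : simp (uss (mprod_ms X Y)) n) :
  (mfun f (act a x.1), mfun g (act a x.2))
  = (act a (mfun f x.1, mfun g x.2).1, act a (mfun f x.1, mfun g x.2).2).
Proof. by rewrite /= !mfun_nat. Qed.

Lemma mprod_mark (X Y X' Y' : msSet) (f : mmap X X') (g : mmap Y Y') n
  (x : simp (uss (mprod_ms X Y)) n) :
  @marked (mprod_ms X Y) n x ->
  @marked (mprod_ms X' Y') n (mfun f x.1, mfun g x.2).
Proof. by case=> h1 h2; split; apply: mfun_mark. Qed.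

Definition mprod (X Y X' Y' : msSet) (f : mmap X X') (g : mmap Y Y') :
  mmap (mprod_ms X Y) (mprod_ms X' Y') :=
  @MMap (mprod_ms X Y) (mprod_ms X' Y') (fun n x => (mfun f x.1, mfun g x.2))
    (@mprod_nat X Y X' Y' f g) (@mprod_mark X Y X' Y' f g).

Lemma delta_act_id n m (x : sop m n) : sop_comp x (sop_id m) = x.
Proof. by apply: sop_eq => i; rewrite !ffunE. Qed.

Lemma delta_act_comp n k m p (a : sop m p) (b : sop k m) (x : sop p n) :
  sop_comp (sop_comp x a) b = sop_comp x (sop_comp a b).
Proof. by apply: sop_eq => i; rewrite !ffunE. Qed.

Definition sdelta (n : nat) : sSet :=
  @SSet (fun m => sop m n) (fun m p a x => sop_comp x a)
    (@delta_act_id n) (@delta_act_comp n).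

Definition contains_hull (n k m : nat) (a : sop m n) : Prop :=
  forall v, v <= n -> k - 1 <= v -> v <= k + 1 ->
    exists i : 'I_m.+1, nat_of_ord (sop_fun a i) = v.

Definition delta_marked (n k : nat) (extra : forall m, sop m n -> Prop)
  m (a : simp (sdelta n) m) : Prop :=
  0 < m /\ (degenerate a \/ (~ degenerate a /\ contains_hull k a) \/ extra m a).

Lemma delta_marked_pos n k extra m (a : simp (sdelta n) m) :
  delta_marked k extra a -> 0 < m.
Proof. by case. Qed.

Lemma delta_marked_degen n k extra m (a : simp (sdelta n) m) :
  degenerate a -> delta_marked k extra a.
Proof.
move=> d; split; last by left.
by case: d => p [s [y [lt _]]]; apply: leq_ltn_trans lt.
Qed.

Definition mdelta (n k : nat) (extra : forall m, sop m n -> Prop) : msSet :=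
  @MSSet (sdelta n) (@delta_marked n k extra)
    (@delta_marked_pos n k extra) (@delta_marked_degen n k extra).

Definition cDelta (n k : nat) : msSet := @mdelta n k (fun m a => False).

Definition cDelta'' (n k : nat) : msSet := @mdelta n k (fun m a => m = n - 1).

(* (Delta^n_k)' : additionally all (n-1)-faces (non-degenerate (n-1)-simplices)
   other than the k-th face delta_k (= the one not containing vertex k) marked *)
Definition cDelta' (n k : nat) : msSet :=
  @mdelta n k (fun m a => m = n - 1 /\ ~ degenerate (a : simp (sdelta n) m) /\
                         exists i : 'I_m.+1, nat_of_ord (sop_fun a i) = k).

Lemma elem_mark n k m (a : simp (uss (cDelta' n k)) m) :
  marked a -> @marked (cDelta'' n k) m a.
Proof. by case=> h [d|[d|[e _]]]; split=> //; [left|right; left|right; right]. Qed.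

Definition elem (n k : nat) : mmap (cDelta' n k) (cDelta'' n k) :=
  @MMap (cDelta' n k) (cDelta'' n k) (fun m a => a) (fun m p a x => erefl)
    (@elem_mark n k).

(* Pushout squares (universal property):
        i
    A ----> B
  f |       | g
    v       v
    C ----> D
        j                                                               *)
Definition is_pushout (A B C D : msSet) (i : mmap A B) (f : mmap A C)
  (g : mmap B D) (j : mmap C D) : Prop :=
  meq (mcomp g i) (mcomp j f) /\
  forall (Z : msSet) (u : mmap B Z) (v : mmap C Z),
    meq (mcomp u i) (mcomp v f) ->
    (exists w : mmap D Z, meq (mcomp w g) u /\ meq (mcomp w j) v) /\
    (forall w w' : mmap D Z, meq (mcomp w g) u -> meq (mcomp w j) v ->
        meq (mcomp w' g) u -> meq (mcomp w' j) v -> meq w w').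

Definition is_wellorder (I : Type) (lt : I -> I -> Prop) : Prop :=
  well_founded lt /\ (forall i j k, lt i j -> lt j k -> lt i k) /\
  (forall i j, i = j \/ lt i j \/ lt j i).

Definition wle (I : Type) (lt : I -> I -> Prop) (i j : I) : Prop := i = j \/ lt i j.

Definition wsucc (I : Type) (lt : I -> I -> Prop) (i j : I) : Prop :=
  lt i j /\ forall k, lt i k -> wle lt j k.

Definition wlimit (I : Type) (lt : I -> I -> Prop) (j : I) : Prop :=
  (exists i, lt i j) /\ ~ (exists i, wsucc lt i j).

Record chain (I : Type) (lt : I -> I -> Prop) := Chain {
  ch_obj : I -> msSet;
  ch_map : forall i j, wle lt i j -> mmap (ch_obj i) (ch_obj j);
  ch_id : forall i (p : wle lt i i), meq (ch_map p) (mid (ch_obj i));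
  ch_comp : forall i j k (p : wle lt i j) (q : wle lt j k) (r : wle lt i k),
      meq (mcomp (ch_map q) (ch_map p)) (ch_map r) }.

Definition is_colim_on (I : Type) (lt : I -> I -> Prop) (X : chain lt)
  (S : I -> Prop) (L : msSet) (c : forall i, S i -> mmap (ch_obj X i) L) : Prop :=
  (forall i j (si : S i) (sj : S j) (p : wle lt i j),
      meq (mcomp (c j sj) (ch_map X p)) (c i si)) /\
  forall (Z : msSet) (d : forall i, S i -> mmap (ch_obj X i) Z),
    (forall i j (si : S i) (sj : S j) (p : wle lt i j),
        meq (mcomp (d j sj) (ch_map X p)) (d i si)) ->
    (exists w : mmap L Z, forall i (si : S i), meq (mcomp w (c i si)) (d i si)) /\
    (forall w w' : mmap L Z,
        (forall i (si : S i), meq (mcomp w (c i si)) (d i si)) ->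
        (forall i (si : S i), meq (mcomp w' (c i si)) (d i si)) -> meq w w').

Definition mclass := forall X Y : msSet, mmap X Y -> Prop.

Definition contains_elementary (P : mclass) : Prop :=
  forall n k, 2 <= n -> k <= n -> P _ _ (elem n k).

Definition closed_pushout (P : mclass) : Prop :=
  forall (A B C D : msSet) (i : mmap A B) (f : mmap A C) (g : mmap B D) (j : mmap C D),
    is_pushout i f g j -> P _ _ i -> P _ _ j.

Definition closed_transfinite (P : mclass) : Prop :=
  forall (J : Type) (lt : J -> J -> Prop) (z : J) (X : chain lt),
    is_wellorder lt ->
    (forall i, wle lt z i) ->
    (forall j, wlimit lt j ->
       @is_colim_on J lt X (fun i => lt i j) (ch_obj X j)
         (fun i (h : lt i j) => ch_map X (or_intror h : wle lt i j))) ->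
    (forall i j (p : wle lt i j), wsucc lt i j -> P _ _ (ch_map X p)) ->
    forall (L : msSet) (c : forall i, True -> mmap (ch_obj X i) L),
      @is_colim_on J lt X (fun _ => True) L c -> P _ _ (c z I).

Definition complicial_marking_extension (X Y : msSet) (h : mmap X Y) : Prop :=
  forall P : mclass,
    contains_elementary P -> closed_pushout P -> closed_transfinite P -> P _ _ h.

From HB Require Import structures.
From mathcomp Require Import all_boot zify.
From mathcomp Require Import boolp wochoice.

Set Implicit Arguments. Unset Strict Implicit. Unset Printing Implicit Defensive.

(* Since f and g are bijective on simplices, the pushout P of the Leibniz
   square is isomorphic to the underlying simplicial set X x Y carrying the
   "pushout marking": (x, y) is marked iff x comes from a marked simplex of A
   and y is marked, or x is marked and y comes from a marked simplex of B.
   The Leibniz product is then this isomorphism followed by an entire map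
   which only adds marks, up to the product marking of X x Y.  Fixing a
   well-ordering of all simplices of X x Y, we add the missing marks one
   simplex at a time.  If (x, y) is an r-simplex with x and y marked, the
   (r+1)-simplex (x.s0, y.s1) has (x, y) as its first face, and all of its
   other faces are already marked; so marking (x, y) is a pushout of the
   elementary extension (Delta^(r+1)_1)' -> (Delta^(r+1)_1)''. *)

Lemma meq_eq (X Y : msSet) (f g : mmap X Y) : meq f g -> f = g.
Proof.
case: f g => f fn fm [g gn gm] /= H.
have E : f = g.
  by apply: functional_extensionality_dep => n; apply: funext => x; exact: H.
by subst g; f_equal; apply: Prop_irrelevance.
Qed.

Lemma colim_top (J : Type) (lt : J -> J -> Prop) (X : chain lt) (t : J)
  (top : forall i, wle lt i t) :
  @is_colim_on J lt X (fun _ => True) (ch_obj X t) (fun i _ => ch_map X (top i)).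
Proof.
split=> [i j _ _ p|Z d Hd]; first exact: ch_comp.
split; first by exists (d t I) => i []; exact: Hd.
move=> w w' Hw Hw' n x.
move: (Hw t I n x) (Hw' t I n x); rewrite /= (ch_id (top t) x) /=.
by move=> -> ->.
Qed.

Inductive three := t0 | t1 | t2.
Definition idx3 (a : three) : nat := match a with t0 => 0 | t1 => 1 | t2 => 2 end.
Definition lt3 (a b : three) : Prop := idx3 a < idx3 b.

Lemma wle3 a b : wle lt3 a b -> idx3 a <= idx3 b.
Proof. by case=> [->//|]; rewrite /lt3 => /ltnW. Qed.

Lemma lt3_wo : is_wellorder lt3.
Proof.
split; last split.
- have acc n a : idx3 a <= n -> Acc lt3 a.
    elim: n a => [|n IH] a ha; constructor=> b; rewrite /lt3 => hb.
      by move: (leq_trans hb ha).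
    by apply: IH; rewrite -ltnS (leq_trans hb ha).
  by move=> a; apply: (acc (idx3 a)).
- by move=> a b c; rewrite /lt3; apply: ltn_trans.
- by case=> [] []; rewrite /lt3 /=; auto.
Qed.

Section Chain3.
Variables (U V W : msSet) (phi : mmap U V) (psi : mmap V W).

Definition obj3 (a : three) : msSet := match a with t0 => U | t1 => V | t2 => W end.

Definition map3 (a b : three) : wle lt3 a b -> mmap (obj3 a) (obj3 b) :=
  match a, b return wle lt3 a b -> mmap (obj3 a) (obj3 b) with
  | t0, t0 => fun _ => mid U
  | t0, t1 => fun _ => phi
  | t0, t2 => fun _ => mcomp psi phi
  | t1, t1 => fun _ => mid V
  | t1, t2 => fun _ => psi
  | t2, t2 => fun _ => mid W
  | t1, t0 => fun p => False_rect _ (notF (wle3 p))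
  | t2, t0 => fun p => False_rect _ (notF (wle3 p))
  | t2, t1 => fun p => False_rect _ (notF (wle3 p))
  end.

Lemma map3_id a (p : wle lt3 a a) : meq (map3 p) (mid (obj3 a)).
Proof. by case: a p. Qed.

Lemma map3_comp a b c (p : wle lt3 a b) (q : wle lt3 b c) (r : wle lt3 a c) :
  meq (mcomp (map3 q) (map3 p)) (map3 r).
Proof. by have := wle3 p; have := wle3 q; case: a b c p q r => [] [] []. Qed.

Definition chain3 : chain lt3 := Chain map3_id map3_comp.
End Chain3.

Section TransfiniteClosure.
Variables (P : mclass) (HT : closed_transfinite P).

(* An isomorphism is the transfinite composite of a one-object sequence, whose
   colimit may be taken to be the target of the isomorphism. *)
Lemma tc_iso (U V : msSet) (phi : mmap U V) (psi : mmap V U) :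
  meq (mcomp psi phi) (mid U) -> meq (mcomp phi psi) (mid V) -> P phi.
Proof.
move=> H1 H2.
pose lt := fun (_ _ : unit) => False.
pose Ch := @Chain unit lt (fun _ => U) (fun _ _ _ => mid U)
  (fun _ _ _ _ => erefl) (fun _ _ _ _ _ _ _ _ => erefl).
have wo : is_wellorder lt.
  split; first by move=> i; constructor=> j [].
  by split=> // [[] []]; left.
have least : forall i, wle lt tt i by case; left.
apply: (@HT unit lt tt Ch wo least _ _ V (fun _ _ => phi)).
- by move=> j [[i []]].
- by move=> i j p [[]].
split=> [i j _ _ p n x //|Z d Hd].
split.
  exists (mcomp (d tt I) psi) => -[] [] n x /=.
  by have := H1 n x => /= ->.
move=> w w' Hw Hw' n x.
have := H2 n x => /= <-.
by have := Hw tt I n (mfun psi x); have := Hw' tt I n (mfun psi x) => /= -> ->.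
Qed.

(* A composite is the transfinite composite of the sequence U -> V -> W. *)
Lemma tc_comp (U V W : msSet) (phi : mmap U V) (psi : mmap V W) :
  P phi -> P psi -> P (mcomp psi phi).
Proof.
move=> Pphi Ppsi.
have least : forall i, wle lt3 t0 i by case; [left|right|right].
have top : forall i, wle lt3 i t2 by case; [right|right|left].
apply: (HT lt3_wo least _ _ (colim_top (chain3 phi psi) top)).
- move=> j [[i hi] nsucc]; exfalso; apply: nsucc.
  case: i hi; case: j => //= _;
    [exists t0|exists t1|exists t1]; split=> //; case; by [left|right].
- move=> i j p [hij hs].
  case: i j p hij hs => [] [] //= p _ hs.
  by have := hs t1 (erefl true); case=> //; rewrite /lt3.
Qed.
End TransfiniteClosure.

Section WellOrder.
Variables (J : Type) (lt : J -> J -> Prop) (wo : is_wellorder lt).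

Lemma wo_irr i : ~ lt i i.
Proof.
have [wf _] := wo; elim: (wf i) => {}i _ IH hi.
exact: (IH i hi hi).
Qed.

Lemma wo_trans i j k : lt i j -> lt j k -> lt i k.
Proof. by have [_ [tr _]] := wo; apply: tr. Qed.

Lemma wo_tot i j : i = j \/ lt i j \/ lt j i.
Proof. by have [_ [_ tot]] := wo. Qed.

Lemma succ_between i j k : wsucc lt i j -> lt i k -> lt k j -> False.
Proof.
move=> [_ H] ik kj; case: (H k ik) => [E|jk].
  by subst; exact: wo_irr kj.
exact: wo_irr (wo_trans jk kj).
Qed.

Lemma limit_between i j : wlimit lt j -> lt i j -> exists k, lt i k /\ lt k j.
Proof.
move=> [_ ns] ij; apply: contrapT => nb; apply: ns; exists i; split=> // k ik.
case: (wo_tot j k) => [->|[jk|kj]]; [by left|by right|].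
by exfalso; apply: nb; exists k.
Qed.
End WellOrder.

(* A well-ordering R (in the sense of every non-empty subset having a least
   element) yields a strict well-order, to which we adjoin a least element
   [bot] and a greatest element [top]. *)
Section BoundedWellOrder.
Variables (W : eqType) (R : rel W) (HR : well_order R).

Let HRC : wo_chain R predT := @withinW W predT _ HR.

Lemma min_of (Q : W -> Prop) a : Q a -> exists z, Q z /\ forall w, Q w -> R z w.
Proof.
move=> Qa; have ne : nonempty [pred z | `[< Q z >]].
  by exists a; rewrite inE; apply/asboolP.
have [z [[zin lb] _]] := HR ne.
exists z; split; first by move: zin; rewrite inE => /asboolP.
by move=> w Qw; apply: lb; rewrite inE; apply/asboolP.
Qed.

Lemma R_anti a b : R a b -> R b a -> a = b.
Proof. by move=> ab ba; apply: (wo_chain_antisymmetric HRC) => //; rewrite ab. Qed.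

Lemma R_trans a b c : R a b -> R b c -> R a c.
Proof.
move=> ab bc.
have [z [[->|[->|->]] H]] :=
  @min_of (fun z => z = a \/ z = b \/ z = c) a (or_introl erefl).
- by apply: H; right; right.
- by rewrite (R_anti ab (H a (or_introl erefl))).
- by rewrite -(R_anti bc (H b (or_intror (or_introl erefl)))).
Qed.

Definition ltW (a b : W) : Prop := R a b /\ a <> b.

Lemma ltW_wf : well_founded ltW.
Proof.
move=> a; apply: contrapT => na.
have [z [nz H]] := @min_of (fun z => ~ Acc ltW z) a na.
apply: nz; constructor=> w [wz neq]; apply: contrapT => nw.
by apply: neq; apply: R_anti wz (H w nw).
Qed.

Lemma ltW_trans a b c : ltW a b -> ltW b c -> ltW a c.
Proof.
move=> [ab nab] [bc nbc]; split; first exact: R_trans ab bc.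
by move=> E; subst c; apply: nab; exact: R_anti ab bc.
Qed.

Lemma ltW_tot a b : a = b \/ ltW a b \/ ltW b a.
Proof.
have [->|ne] := EM (a = b); first by left.
have /orP[ab|ba] := wo_chainW HRC (isT : a \in predT) (isT : b \in predT).
- by right; left.
- by right; right; split=> // E; apply: ne.
Qed.

Inductive bounded := bot | inner of W | top.

Definition lt_bounded (i j : bounded) : Prop :=
  match i, j with
  | bot, inner _ => True | bot, top => True
  | inner a, inner b => ltW a b | inner _, top => True
  | _, _ => False end.

Lemma bounded_wo : is_wellorder lt_bounded.
Proof.
have acc_bot : Acc lt_bounded bot by constructor=> j; case: j => [|b|] /= [].
have acc_inner a : Acc lt_bounded (inner a).
  elim: (ltW_wf a) => {}a _ IH; constructor=> j.
  by case: j => [|b|] /= h; [exact: acc_bot|exact: IH|case: h].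
split; last split.
- case=> [|a|]; [exact: acc_bot|exact: acc_inner|].
  by constructor=> j; case: j => [|b|] /= h; [exact: acc_bot|exact: acc_inner|case: h].
- by case=> [|a|] [|b|] [|c|] //=; exact: ltW_trans.
- case=> [|a|] [|b|] /=; try by [left|right; left|right; right].
  by case: (ltW_tot a b) => [->|[h|h]]; [left|right; left|right; right].
Qed.

Lemma bot_least i : wle lt_bounded bot i.
Proof. by case: i => [|a|]; [left|right|right]. Qed.
End BoundedWellOrder.
Arguments bot {W}.
Arguments top {W}.

Lemma sop_le m n (c : sop m n) (i j : 'I_m.+1) : i <= j -> sop_fun c i <= sop_fun c j.
Proof.
move=> hij; have := sop_mono c.
by move/forallP => /(_ i) /forallP /(_ j) /implyP /(_ hij).
Qed.

Lemma sop_compE k m n (a : sop m n) (b : sop k m) i :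
  sop_fun (sop_comp a b) i = sop_fun a (sop_fun b i).
Proof. by rewrite /= ffunE. Qed.

Lemma mksop_mono m n (F : nat -> nat) (HF : forall i j, i <= j -> F i <= F j) :
  [forall i : 'I_m.+1, forall j : 'I_m.+1,
     (i <= j) ==> (([ffun v : 'I_m.+1 => inord (minn (F v) n)] : {ffun 'I_m.+1 -> 'I_n.+1}) i
                   <= ([ffun v : 'I_m.+1 => inord (minn (F v) n)] : {ffun 'I_m.+1 -> 'I_n.+1}) j)].
Proof.
apply/forallP=> i; apply/forallP=> j; apply/implyP=> hij; rewrite !ffunE.
rewrite !inordK ?ltnS ?geq_minr //.
have := HF _ _ hij; lia.
Qed.

Definition mksop m n (F : nat -> nat) (HF : forall i j, i <= j -> F i <= F j) : sop m n :=
  Sop (mksop_mono m n HF).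

Lemma mksopE m n F HF (i : 'I_m.+1) :
  nat_of_ord (sop_fun (@mksop m n F HF) i) = minn (F i) n.
Proof. by rewrite /= ffunE inordK // ltnS geq_minr. Qed.

Definition cnat m n (c : sop m n) (v : nat) : nat :=
  nat_of_ord (sop_fun c (inord (minn v m))).

Lemma cnat_mono m n (c : sop m n) v w : v <= w -> cnat c v <= cnat c w.
Proof. by move=> h; apply: sop_le; rewrite !inordK ?ltnS ?geq_minr //; lia. Qed.

Lemma cnat_le m n (c : sop m n) v : cnat c v <= n.
Proof. by rewrite /cnat -ltnS. Qed.

Lemma cnatE m n (c : sop m n) (i : 'I_m.+1) : cnat c i = sop_fun c i.
Proof.
rewrite /cnat; congr (nat_of_ord (sop_fun c _)); apply: val_inj.
by rewrite /= inordK; have := ltn_ord i; lia.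
Qed.

Lemma deg_act m n (a : sop m n) (Z : sSet) (z : simp Z n) :
  @degenerate (sdelta n) m a -> degenerate (act a z).
Proof.
case=> p [s [y [hp ->]]]; exists p, s, (act y z); split=> //.
by rewrite /= -act_comp.
Qed.

(* An operator identifying the adjacent vertices l and l+1 factors through
   the codegeneracy collapsing them, hence is degenerate. *)
Lemma collapse_degenerate m n (c : sop m.+1 n) l :
  l < m.+1 -> cnat c l = cnat c l.+1 -> @degenerate (sdelta n) m.+1 c.
Proof.
move=> hl El.
pose F := fun v => v - minn (v - l) 1.
have HF : forall v w, v <= w -> F v <= F w by move=> v w; rewrite /F; lia.
pose G := fun v => cnat c (v + minn (v - l) 1).
have HG : forall v w, v <= w -> G v <= G w by move=> v w h; apply: cnat_mono; lia.
exists m, (@mksop m.+1 m F HF), (@mksop m n G HG); split=> //.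
apply: sop_eq => v /=; apply: val_inj; rewrite ffunE /= (mksopE _ HG).
rewrite (minn_idPl (cnat_le _ _)) (mksopE _ HF) -(cnatE c v).
have hv := ltn_ord v.
have -> : minn (F v) m = F v by rewrite /F; lia.
rewrite /F; case: (ltngtP v l) => h.
- by congr (cnat c _); lia.
- case: (ltngtP v l.+1) => h2; first lia.
    by congr (cnat c _); lia.
  by rewrite h2 -El; congr (cnat c _); lia.
- by congr (cnat c _); lia.
Qed.

Lemma noninj_degenerate m n (c : sop m n) (i j : 'I_m.+1) :
  i != j -> sop_fun c i = sop_fun c j -> @degenerate (sdelta n) m c.
Proof.
wlog hij : i j / i < j.
  move=> W ne E; case: (ltngtP i j) => h.
  - exact: (W i j).
  - by apply: (W j i) => //; rewrite eq_sym.
  - by move: ne; rewrite (val_inj h) eqxx.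
move=> _ E.
have El : cnat c i = cnat c i.+1.
  apply/eqP; rewrite eqn_leq cnat_mono //=.
  by have := cnat_mono c (hij : i.+1 <= j); rewrite !cnatE E.
have hl : i < m by have := ltn_ord j; lia.
move: El hl; move: (nat_of_ord i) => l; clear i j hij E.
by case: m c => [|m] c El hl //; exact: collapse_degenerate hl El.
Qed.

Lemma injective_or_degenerate m n (c : sop m n) :
  injective (sop_fun c) \/ @degenerate (sdelta n) m c.
Proof.
case: (boolP (injectiveb (sop_fun c))) => [/injectiveP|/injectivePn [i [j ne E]]].
  by left.
by right; exact: noninj_degenerate ne E.
Qed.

Lemma injective_sop_id r (c : sop r r) :
  injective (sop_fun c) -> forall i : 'I_r.+1, nat_of_ord (sop_fun c i) = i.
Proof.
move=> inj.
have strict v w : v < w -> w <= r -> cnat c v < cnat c w.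
  move=> hvw hw; rewrite ltn_neqAle cnat_mono ?andbT; last exact: ltnW.
  apply/negP => /eqP E; have := congr1 (@nat_of_ord _) (inj _ _ (val_inj E)).
  by rewrite !inordK; lia.
have low v : v <= r -> v <= cnat c v.
  elim: v => [//|v IH] hv; have := strict v v.+1 (ltnSn v) hv.
  by have := IH (ltnW hv); lia.
have up d v : v + d <= r -> cnat c v + d <= cnat c (v + d).
  elim: d => [|d IH] h; first by rewrite !addn0.
  have := IH ltac:(lia); have := strict (v + d) (v + d.+1) ltac:(lia) h.
  by rewrite addnS; lia.
move=> i; rewrite -cnatE; have hi := ltn_ord i.
have := low i (hi : (i <= r)%N); have := up (r - i) i ltac:(lia).
by have := cnat_le c (i + (r - i)); lia.
Qed.

Lemma act_idop r (c : sop r r) (Z : sSet) (z : simp Z r) :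
  (forall i : 'I_r.+1, nat_of_ord (sop_fun c i) = i) -> act c z = z.
Proof.
move=> h; have -> : c = sop_id r.
  by apply: sop_eq => i; apply: val_inj; rewrite ffunE /= h.
exact: act_id.
Qed.

(* The codegeneracies s0, s1 : [r+1] -> [r] (collapsing 0,1 resp. 1,2) and
   the coface d1 : [r] -> [r+1] (omitting 1); s0 d1 = s1 d1 = id. *)
Definition s0 r : sop r.+1 r :=
  @mksop r.+1 r (fun v => v - 1) (fun v w h => leq_sub2r 1 h).
Lemma s1_mono (v w : nat) : v <= w -> minn v 1 + (v - 2) <= minn w 1 + (w - 2).
Proof. lia. Qed.
Definition s1 r : sop r.+1 r := @mksop r.+1 r (fun v => minn v 1 + (v - 2)) s1_mono.
Lemma d1_mono (v w : nat) : v <= w -> v + minn v 1 <= w + minn w 1.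
Proof. lia. Qed.
Definition d1 r : sop r r.+1 := @mksop r r.+1 (fun v => v + minn v 1) d1_mono.

Lemma s0E r i : nat_of_ord (sop_fun (s0 r) i) = minn (i - 1) r.
Proof. exact: mksopE. Qed.
Lemma s1E r i : nat_of_ord (sop_fun (s1 r) i) = minn (minn i 1 + (i - 2)) r.
Proof. exact: mksopE. Qed.

Lemma s0d1 r (i : 'I_r.+1) : nat_of_ord (sop_fun (sop_comp (s0 r) (d1 r)) i) = i.
Proof. by rewrite sop_compE s0E mksopE; have := ltn_ord i; lia. Qed.
Lemma s1d1 r (i : 'I_r.+1) : nat_of_ord (sop_fun (sop_comp (s1 r) (d1 r)) i) = i.
Proof. by rewrite sop_compE s1E mksopE; have := ltn_ord i; lia. Qed.

Lemma d1_marked r : 0 < r -> @marked (cDelta'' r.+1 1) r (d1 r).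
Proof. by split=> //; right; right; rewrite subn1. Qed.

Lemma sigT_transport (I : Type) (F : I -> Type) (Q : forall i, F i -> Prop)
  (p q : {i & F i}) : p = q -> Q (projT1 q) (projT2 q) -> Q (projT1 p) (projT2 p).
Proof. by move->. Qed.

Section Markings.
Variable T : sSet.

Record mark := Mark {
  mM : forall n, simp T n -> Prop;
  mpos : forall n (x : simp T n), mM x -> 0 < n;
  mdeg : forall n (x : simp T n), degenerate x -> mM x }.

Definition obj (m : mark) : msSet := @MSSet T (@mM m) (@mpos m) (@mdeg m).

Definition submark (m m' : mark) := forall n (x : simp T n), mM m x -> mM m' x.

Definition incl (m m' : mark) (H : submark m m') : mmap (obj m) (obj m') :=
  @MMap (obj m) (obj m') (fun n x => x) (fun _ _ _ _ => erefl) H.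

(* Re-marking by an equivalent marking is an isomorphism, hence lies in any
   transfinitely closed class. *)
Lemma incl_tc (P : mclass) : closed_transfinite P ->
  forall m m' (H : submark m m'), submark m' m -> P _ _ (incl H).
Proof. by move=> HT m m' H H'; apply: (tc_iso HT (psi := incl H')). Qed.

Section MarkingChain.
Variables (J : Type) (lt : J -> J -> Prop) (Mk : J -> mark)
  (mono : forall i j, wle lt i j -> submark (Mk i) (Mk j)).

Definition mchain : chain lt :=
  @Chain J lt (fun i => obj (Mk i)) (fun i j p => incl (mono p))
    (fun _ _ _ _ => erefl) (fun _ _ _ _ _ _ _ _ => erefl).

(* Over a non-empty set of indices S, the union of the markings is a colimit:
   all the maps in a cocone agree on simplices, and a simplex marked in the
   union is marked at some stage. *)
Lemma mchain_colim (S : J -> Prop) (ML : mark)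
  (sub : forall i, S i -> submark (Mk i) ML)
  (cov : forall n (x : simp T n), mM ML x -> exists i, S i /\ mM (Mk i) x)
  (tot : forall i j, i = j \/ lt i j \/ lt j i)
  (ne : exists i, S i) :
  @is_colim_on J lt mchain S (obj ML) (fun i si => incl (sub i si)).
Proof.
split=> [//|Z d Hd].
have [i0 si0] := ne.
have agree i (si : S i) n x : mfun (d i si) x = mfun (d i0 si0) x :> simp (uss Z) n.
  case: (tot i i0) => [E|[lt1|lt1]].
  - by subst i0; have := Hd i i si si0 (or_introl erefl) n x.
  - by have := Hd i i0 si si0 (or_intror lt1) n x.
  - by have := Hd i0 i si0 si (or_intror lt1) n x.
have mk n (x : simp (uss (obj ML)) n) : marked x -> marked (mfun (d i0 si0) x).
  move=> /cov [i [si mi]]; rewrite -(agree i si).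
  exact: (mfun_mark (d i si) mi).
split.
  exists (@MMap (obj ML) Z (fun n x => mfun (d i0 si0) x)
            (fun m n a x => @mfun_nat _ _ (d i0 si0) m n a x) mk).
  by move=> i si n x /=; rewrite (agree i si).
move=> w w' Hw Hw' n x.
by have := Hw i0 si0 n x; have := Hw' i0 si0 n x => /= -> ->.
Qed.
End MarkingChain.

Section OneSimplexPushout.
Variables (N k : nat) (sg : simp T N) (M M' : mark) (HMM : submark M M').
Hypothesis land' : forall m (a : sop m N), @marked (cDelta' N k) m a -> mM M (act a sg).
Hypothesis land'' : forall m (a : sop m N), @marked (cDelta'' N k) m a -> mM M' (act a sg).
Hypothesis new_marks : forall n (x : simp T n), mM M' x -> mM M x \/
   exists a : sop n N, @marked (cDelta'' N k) n a /\ x = act a sg.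

Lemma smap_nat m p (a : sop m p) (x : sop p N) :
  act (sop_comp x a) sg = act a (act x sg).
Proof. by rewrite act_comp. Qed.

Definition sm' : mmap (cDelta' N k) (obj M) :=
  @MMap (cDelta' N k) (obj M) (fun m a => act a sg) (fun m p a x => smap_nat a x) land'.
Definition sm'' : mmap (cDelta'' N k) (obj M') :=
  @MMap (cDelta'' N k) (obj M') (fun m a => act a sg) (fun m p a x => smap_nat a x) land''.

Lemma one_simplex_pushout : is_pushout (elem N k) sm' sm'' (incl HMM).
Proof.
split=> [//|Z u v Huv].
have mk n (x : simp (uss (obj M')) n) : marked x -> marked (mfun v x).
  move=> /new_marks [mx|[a [ma ->]]]; first exact: (mfun_mark v mx).
  by have := Huv n a => /= <-; exact: (mfun_mark u ma).
split.
  exists (@MMap (obj M') Z (fun n x => mfun v x)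
            (fun m n a x => @mfun_nat _ _ v m n a x) mk).
  by split=> n x //=; have := Huv n x => /= ->.
move=> w w' _ Hw _ Hw' n x.
by have := Hw n x; have := Hw' n x => /= -> ->.
Qed.
End OneSimplexPushout.
End Markings.

Definition simplices (T : sSet) := {n : nat & simp T n}.
HB.instance Definition _ (T : sSet) := gen_eqMixin (simplices T).

Definition simplex_of (T : sSet) n (t : simp T n) : simplices T := existT _ n t.

Section Product.
Variables (A X B Y : msSet) (f : mmap A X) (g : mmap B Y)
  (fi : forall n, simp (uss X) n -> simp (uss A) n)
  (gi : forall n, simp (uss Y) n -> simp (uss B) n).
Hypotheses (fK : forall n (x : simp (uss X) n), mfun f (fi x) = x)
  (fiK : forall n (a : simp (uss A) n), fi (mfun f a) = a)
  (gK : forall n (y : simp (uss Y) n), mfun g (gi y) = y)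
  (giK : forall n (b : simp (uss B) n), gi (mfun g b) = b).

Lemma fi_nat m n (a : sop m n) (x : simp (uss X) n) : fi (act a x) = act a (fi x).
Proof. by rewrite -{1}(fK x) -mfun_nat fiK. Qed.
Lemma gi_nat m n (a : sop m n) (y : simp (uss Y) n) : gi (act a y) = act a (gi y).
Proof. by rewrite -{1}(gK y) -mfun_nat giK. Qed.

Lemma fi_degenerate n (x : simp (uss X) n) : degenerate x -> marked (fi x).
Proof.
case=> p [s [z [hp ->]]]; apply: marked_degen; exists p, s, (fi z).
by rewrite fi_nat.
Qed.
Lemma gi_degenerate n (y : simp (uss Y) n) : degenerate y -> marked (gi y).
Proof.
case=> p [s [z [hp ->]]]; apply: marked_degen; exists p, s, (gi z).
by rewrite gi_nat.
Qed.

Definition TT := sprod (uss X) (uss Y).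

(* The pushout marking: the marks of A x Y and of X x B, transported to X x Y. *)
Definition pmarked n (t : simp TT n) : Prop :=
  (marked (fi t.1) /\ marked t.2) \/ (marked t.1 /\ marked (gi t.2)).

Lemma pmarked_pos n (t : simp TT n) : pmarked t -> 0 < n.
Proof. by case=> [[h _]|[h _]]; exact: marked_pos h. Qed.

Lemma pmarked_degen n (t : simp TT n) : degenerate t -> pmarked t.
Proof.
case=> p [s [z [hp ->]]]; left; split.
- by apply: fi_degenerate; exists p, s, z.1.
- by apply: marked_degen; exists p, s, z.2.
Qed.

Definition pmark : mark TT := Mark pmarked_pos pmarked_degen.
Definition fullmark : mark TT := @Mark TT (@prod_marked X Y) (@prod_marked_pos X Y)
  (@prod_marked_degen X Y).

Lemma pmark_full : submark pmark fullmark.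
Proof.
move=> n t [[h1 h2]|[h1 h2]]; split=> //.
  by rewrite -(fK t.1); exact: mfun_mark.
by rewrite -(gK t.2); exact: mfun_mark.
Qed.

(* The key simplex: for an r-simplex (x, y) with x and y marked, the
   (r+1)-simplex sg = (x.s0, y.s1) has first face (x, y), and every other
   marked simplex of (Delta^(r+1)_1)'' is sent by sg to a pmarked simplex. *)
Section KeySimplex.
Variables (r : nat) (x : simp (uss X) r) (y : simp (uss Y) r).
Hypotheses (hr : 0 < r) (hx : marked x) (hy : marked y).

Definition sg : simp TT r.+1 := (act (s0 r) x, act (s1 r) y).

Lemma act_sg m (a : sop m r.+1) :
  act a sg = (act (sop_comp (s0 r) a) x, act (sop_comp (s1 r) a) y).
Proof. by rewrite /= !act_comp. Qed.

Lemma sg_d1 : act (d1 r) sg = (x, y).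
Proof. by rewrite act_sg !act_idop //; [exact: s1d1|exact: s0d1]. Qed.

Lemma face_of_sg (a : sop r r.+1) :
  pmarked (act a sg) \/
  ((forall i, nat_of_ord (sop_fun (sop_comp (s0 r) a) i) = i) /\
   (forall i, nat_of_ord (sop_fun (sop_comp (s1 r) a) i) = i)).
Proof.
rewrite act_sg.
case: (injective_or_degenerate (sop_comp (s0 r) a)) => [ic|dc];
case: (injective_or_degenerate (sop_comp (s1 r) a)) => [id|dd].
- by right; split; exact: injective_sop_id.
- left; right; split; first by rewrite /= act_idop //; exact: injective_sop_id.
  exact: gi_degenerate (deg_act y dd).
- left; left; split; first exact: fi_degenerate (deg_act x dc).
  by rewrite /= act_idop //; exact: injective_sop_id.
- by left; left; split; [exact: fi_degenerate (deg_act x dc)|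
                         exact: marked_degen (deg_act y dd)].
Qed.

(* A simplex containing the vertices 0, 1, 2 (all present as r > 0) is sent
   to a simplex which is degenerate in both coordinates. *)
Lemma hull_of_sg m (a : sop m r.+1) : contains_hull 1 a -> pmarked (act a sg).
Proof.
move=> hull.
have [i0 h0] := hull 0 ltac:(done) ltac:(done) ltac:(done).
have [i1 h1] := hull 1 ltac:(done) ltac:(done) ltac:(done).
have [i2 h2] := hull 2 ltac:(lia) ltac:(done) ltac:(done).
left; rewrite act_sg; split.
  apply: fi_degenerate; apply: deg_act; apply: (noninj_degenerate (i := i0) (j := i1)).
    by apply/negP => /eqP E; move: h0 h1; rewrite E => ->.
  by apply: ord_inj; rewrite !sop_compE !s0E h0 h1.
apply: marked_degen; apply: deg_act; apply: (noninj_degenerate (i := i1) (j := i2)).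
  by apply/negP => /eqP E; move: h1 h2; rewrite E => ->.
by apply: ord_inj; rewrite !sop_compE !s1E h1 h2.
Qed.

(* sg sends the marked simplices of (Delta^(r+1)_1)' to pmarked ones: the
   extra marked faces contain vertex 1, so none of them is the first face. *)
Lemma sg_marked' m (a : sop m r.+1) : @marked (cDelta' r.+1 1) m a -> pmarked (act a sg).
Proof.
case=> _ [da|[[nd hull]|[em [nd [i hi]]]]].
- exact: pmarked_degen (deg_act sg da).
- exact: hull_of_sg.
- move: a nd hi; rewrite subn1 /= in em; subst m => a nd hi.
  case: (face_of_sg a) => [//|[e0 e1]].
  by have := e0 i; have := e1 i; rewrite !sop_compE s0E s1E hi; lia.
Qed.

Lemma sg_marked'' (M' : mark TT) (sub : submark pmark M')
  (mt : mM M' ((x, y) : simp TT r))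
  m (a : sop m r.+1) : @marked (cDelta'' r.+1 1) m a -> mM M' (act a sg).
Proof.
case=> hm [da|[[nd hull]|em]].
- by apply: sub; apply: sg_marked'; split=> //; left.
- by apply: sub; apply: sg_marked'; split=> //; right; left.
- move: a; rewrite subn1 in em; subst m => a.
  case: (face_of_sg a) => [h|[e0 e1]]; first exact: sub.
  by rewrite act_sg !act_idop.
Qed.
End KeySimplex.

Section PushoutIdentification.
Variables (P : msSet) (l1 : mmap (mprod_ms A Y) P) (l2 : mmap (mprod_ms X B) P).
Hypothesis Hpo : is_pushout (mprod (mid A) g) (mprod f (mid B)) l1 l2.

Lemma leg1_nat m n (a : sop m n) (p : simp (uss (mprod_ms A Y)) n) :
  ((mfun f (act a p.1), act a p.2) : simp TT m) = act a ((mfun f p.1, p.2) : simp TT n).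
Proof. by rewrite /= mfun_nat. Qed.
Lemma leg1_mark n (p : simp (uss (mprod_ms A Y)) n) :
  marked p -> @marked (obj pmark) n (mfun f p.1, p.2).
Proof. by case=> h1 h2; left; rewrite /= fiK. Qed.
Definition leg1 : mmap (mprod_ms A Y) (obj pmark) :=
  @MMap (mprod_ms A Y) (obj pmark) (fun n p => (mfun f p.1, p.2)) leg1_nat leg1_mark.

Lemma leg2_nat m n (a : sop m n) (p : simp (uss (mprod_ms X B)) n) :
  ((act a p.1, mfun g (act a p.2)) : simp TT m) = act a ((p.1, mfun g p.2) : simp TT n).
Proof. by rewrite /= mfun_nat. Qed.
Lemma leg2_mark n (p : simp (uss (mprod_ms X B)) n) :
  marked p -> @marked (obj pmark) n (p.1, mfun g p.2).
Proof. by case=> h1 h2; right; rewrite /= giK. Qed.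
Definition leg2 : mmap (mprod_ms X B) (obj pmark) :=
  @MMap (mprod_ms X B) (obj pmark) (fun n p => (p.1, mfun g p.2)) leg2_nat leg2_mark.

Lemma legs_agree n (x : simp (uss X) n) (y : simp (uss Y) n) :
  mfun l1 (fi x, y) = mfun l2 (x, gi y).
Proof. by have := (proj1 Hpo) n (fi x, gi y) => /=; rewrite gK fK. Qed.

Lemma unglue_nat m n (a : sop m n) (t : simp TT n) :
  mfun l1 (fi (act a t.1), act a t.2) = act a (mfun l1 (fi t.1, t.2)).
Proof.
by rewrite fi_nat -(mfun_nat l1 a ((fi t.1, t.2) : simp (uss (mprod_ms A Y)) n)).
Qed.
Lemma unglue_mark n (t : simp TT n) :
  @marked (obj pmark) n t -> marked (mfun l1 (fi t.1, t.2)).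
Proof.
case=> [[h1 h2]|[h1 h2]]; first by apply: mfun_mark; split.
by rewrite legs_agree; apply: mfun_mark; split.
Qed.
Definition unglue : mmap (obj pmark) P :=
  @MMap (obj pmark) P (fun n (t : simp TT n) => mfun l1 (fi t.1, t.2))
    unglue_nat unglue_mark.

Lemma leibniz_factor (h : mmap P (mprod_ms X Y)) :
  meq (mcomp h l1) (mprod f (mid Y)) -> meq (mcomp h l2) (mprod (mid X) g) ->
  exists w : mmap P (obj pmark),
    [/\ meq (mcomp unglue w) (mid P), meq (mcomp w unglue) (mid (obj pmark))
      & meq h (mcomp (incl pmark_full) w)].
Proof.
move=> Hh1 Hh2.
have [[w [Hw1 Hw2]] _] := (proj2 Hpo) _ leg1 leg2 (fun n x => erefl).
exists w; split.
- have [_ uniq] := (proj2 Hpo) P l1 l2 (proj1 Hpo).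
  apply: uniq => // n p /=.
  + by have E := Hw1 n p; rewrite /= in E; rewrite E /= fiK; case: (p) E.
  + by have E := Hw2 n p; rewrite /= in E; rewrite E /= legs_agree giK; case: (p) E.
- move=> n t /=; have E := Hw1 n ((fi t.1, t.2) : simp (uss (mprod_ms A Y)) n).
  by rewrite /= in E; rewrite E /= fK; case: (t) E.
- have [_ uniq] := (proj2 Hpo) (mprod_ms X Y) (mprod f (mid Y)) (mprod (mid X) g)
                     (fun n x => erefl).
  exact: uniq.
Qed.
End PushoutIdentification.

Section RemarkingChain.
Variables (R : rel (simplices TT)) (HR : well_order R).
Let J := bounded (simplices TT).
Let lt := lt_bounded R.
Let wo : is_wellorder lt := bounded_wo HR.

Definition stage_marked (j : J) n (t : simp TT n) : Prop :=
  pmarked t \/ (@prod_marked X Y n t /\ lt (inner (simplex_of t)) j).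

Lemma stage_pos j n (t : simp TT n) : stage_marked j t -> 0 < n.
Proof. by case=> [/pmarked_pos|[/prod_marked_pos]]. Qed.
Lemma stage_degen j n (t : simp TT n) : degenerate t -> stage_marked j t.
Proof. by move=> d; left; exact: pmarked_degen. Qed.
Definition stage (j : J) : mark TT := Mark (@stage_pos j) (@stage_degen j).

Lemma stage_mono i j : wle lt i j -> submark (stage i) (stage j).
Proof.
move=> p n t [mq|[fm lj]]; first by left.
by right; split=> //; case: p => [<-//|ij]; exact: (wo_trans wo lj ij).
Qed.

Lemma stage_full j : submark (stage j) fullmark.
Proof. by move=> n t [mq|[fm _]] //; exact: pmark_full mq. Qed.

Lemma pmark_stage j : submark pmark (stage j).
Proof. by move=> n t mq; left. Qed.

Lemma stage_bot : submark (stage bot) pmark.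
Proof. by move=> n t [mq|[_ []]]. Qed.

Lemma stage_succ t0 j : wsucc lt (inner t0) j ->
  forall n (t : simp TT n), mM (stage j) t ->
    mM (stage (inner t0)) t \/ (simplex_of t = t0 /\ @prod_marked X Y n t).
Proof.
move=> hs n t [mq|[fm lj]]; first by left; left.
case: (ltW_tot HR (simplex_of t) t0) => [E|[l|l]].
- by right.
- by left; right.
- by exfalso; apply: (succ_between wo hs (l : lt (inner _) (inner _)) lj).
Qed.

Lemma stage_limit j : wlimit lt j ->
  @is_colim_on J lt (mchain stage_mono) (fun i => lt i j) (obj (stage j))
    (fun i (hi : lt i j) => incl (stage_mono (or_intror hi : wle lt i j))).
Proof.
move=> hl; apply: mchain_colim; [move=> n t [mq|[fm lj]]|exact: (wo_tot wo)|exact: hl.1].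
  have [i0 hi0] := hl.1; exists bot; split; last by left.
  by case: j hl hi0 => [|b|] // _; case: i0.
have [k [h1 h2]] := limit_between wo hl lj.
by exists k; split=> //; right; split.
Qed.

Lemma stage_colim :
  @is_colim_on J lt (mchain stage_mono) (fun _ => True) (obj fullmark)
    (fun i _ => incl (@stage_full i)).
Proof.
apply: mchain_colim; [|exact: (wo_tot wo)|by exists bot].
by move=> n t fm; exists top; split=> //; right; split.
Qed.

Variables (PC : mclass) (HE : contains_elementary PC) (HP : closed_pushout PC)
  (HT : closed_transfinite PC).

Lemma succ_pushout r (x : simp (uss X) r) (y : simp (uss Y) r) j
  (p : wle lt (inner (simplex_of ((x, y) : simp TT r))) j) :
  wsucc lt (inner (simplex_of ((x, y) : simp TT r))) j -> marked x -> marked y ->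
  PC (incl (stage_mono p)).
Proof.
move=> hs hx hy; have hr := marked_pos hx.
have xy_marked : mM (stage j) ((x, y) : simp TT r) by right; split=> //; case: hs.
have land' m (a : sop m r.+1) : @marked (cDelta' r.+1 1) m a ->
    mM (stage (inner (simplex_of ((x, y) : simp TT r)))) (act a (sg x y)).
  by move=> ha; left; exact (sg_marked' hr hx hy ha).
have land'' m (a : sop m r.+1) : @marked (cDelta'' r.+1 1) m a ->
    mM (stage j) (act a (sg x y)).
  exact: (sg_marked'' hr hx hy (@pmark_stage j) xy_marked).
have new_marks n (t : simp TT n) : mM (stage j) t ->
    mM (stage (inner (simplex_of ((x, y) : simp TT r)))) t \/
    exists b : sop n r.+1, @marked (cDelta'' r.+1 1) n b /\ t = act b (sg x y).
  move=> /(stage_succ hs) [old|[E _]]; first by left.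
  right; apply: (sigT_transport (Q := fun m s =>
    exists b : sop m r.+1, @marked (cDelta'' r.+1 1) m b /\ s = act b (sg x y)) E).
  by exists (d1 r); split; [exact: d1_marked|rewrite sg_d1].
apply: (HP (one_simplex_pushout (stage_mono p) land' land'' new_marks)).
by apply: HE; lia.
Qed.

(* Every successor step lies in PC: leaving the bottom stage adds no mark, and
   leaving the stage of (x, y) adds (x, y) if x and y are marked, and nothing
   otherwise. *)
Lemma succ_step i j (p : wle lt i j) : wsucc lt i j -> PC (incl (stage_mono p)).
Proof.
move=> hs; case: i p hs => [|[r [x y]]|] p hs.
- apply: (incl_tc HT) => n t [mq|[fm lj]]; first by left.
  by exfalso; apply: (succ_between wo hs _ lj).
- have [[hx hy]|nm] := EM (marked x /\ marked y); first exact: succ_pushout.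
  apply: (incl_tc HT) => n t /(stage_succ hs) [//|[E fm]].
  apply: False_ind; apply: nm.
  exact: (sigT_transport (Q := fun m s => @prod_marked X Y m s) (esym E) fm).
- by case: hs; case: j p.
Qed.

Lemma chain_tc : PC (incl (@stage_full bot)).
Proof. exact: (HT wo (bot_least R) stage_limit succ_step stage_colim). Qed.
End RemarkingChain.

Lemma pmark_full_cme : complicial_marking_extension (incl pmark_full).
Proof.
move=> PC HE HP HT; have [R HR] := well_ordering_principle (simplices TT).
have -> : incl pmark_full = mcomp (incl (@stage_full R bot)) (incl (@pmark_stage R bot)).
  exact: meq_eq.
apply: (tc_comp HT); last exact: chain_tc.
exact: (incl_tc HT _ (@stage_bot R)).
Qed.
End Product.

Lemma entire_inverse (X Y : msSet) (f : mmap X Y) : entire f ->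
  {fi : forall n, simp (uss Y) n -> simp (uss X) n |
     forall n (y : simp (uss Y) n), mfun f (fi n y) = y &
     forall n (x : simp (uss X) n), fi n (mfun f x) = x}.
Proof.
move=> ef.
have inv n : {fi : simp (uss Y) n -> simp (uss X) n |
                cancel (@mfun X Y f n) fi /\ cancel fi (@mfun X Y f n)}.
  by apply: cid; case: (ef n) => fi h1 h2; exists fi.
by exists (fun n => sval (inv n)) => n; case: (inv n) => fi [].
Qed.

Theorem proposition1p18 (A X B Y : msSet) (f : mmap A X) (g : mmap B Y) :
  entire f -> entire g ->
  forall (P : msSet) (l1 : mmap (mprod_ms A Y) P) (l2 : mmap (mprod_ms X B) P),
    is_pushout (mprod (mid A) g) (mprod f (mid B)) l1 l2 ->
    forall h : mmap P (mprod_ms X Y),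
      meq (mcomp h l1) (mprod f (mid Y)) ->
      meq (mcomp h l2) (mprod (mid X) g) ->
      complicial_marking_extension h.
Proof.
move=> ef eg P l1 l2 Hpo h Hh1 Hh2 PC HE HP HT.
have [fi fK fiK] := entire_inverse ef.
have [gi gK giK] := entire_inverse eg.
have [w [wK Kw Eh]] := leibniz_factor fK fiK gK giK Hpo Hh1 Hh2.
rewrite (meq_eq Eh).
exact: (tc_comp HT (tc_iso HT wK Kw) (pmark_full_cme fK fiK gK giK HE HP HT)).
Qed.
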